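(* If $q$ is even, each of the $q-1$ $T$-sls-pencils $T\mathcal S_\theta$ arches over a distinct $T$-plane. If $q$ is odd, then each of the $\frac{q-1}{2}$ $T$-sls-pencils $T\mathcal S_\theta$ with $N(\theta)$ a nonzero square in $\mathbb{F}_q$ arches over exactly two of the $T$-planes, and the remaining $\frac{q-1}{2}$ $T$-sls-pencils arch over no $T$-plane.
   Context: Let $q$ be a prime power, $\mathbb{F}_{q^3}^*=\mathbb{F}_{q^3}\setminus\{0\}$, $N(x)=x^{q^2+q+1}$. Points of $\mathrm{PG}(2,q^3)$ have homogeneous coordinates $(x,y,z)$. Let $T=(0,0,1)$ and $m_T$ the line $[0,0,1]$. For $\theta\in\mathbb{F}_{q^3}^*$ let $\mathcal S_\theta=\{(x\theta,x^q,0):x\in\mathbb{F}_{q^3}^*\}$; $\mathcal S_{\theta_1}=\mathcal S_{\theta_2}$ iff $N(\theta_1)=N(\theta_2)$, giving $q-1$ distinct sets, and the $q-1$ pencils $T\mathcal S_\theta=\{TX:X\in\mathcal S_\theta\}$ are the $T$-sls-pencils. For $\theta\in\mathbb{F}_{q^3}^*$, the $T$-plane $\Pi_\theta=\{(r\theta^{q+1},r^q,r^{q^2}\theta):r\in\mathbb{F}_{q^3}^*\}$ is a subplane of order $q$; $\Pi_\theta=\Pi_\kappa$ iff $N(\theta)=N(\kappa)$, so there are $q-1$ distinct $T$-planes. A $T$-sls-pencil arches over a $T$-plane if each of the $q^2+q+1$ lines of the pencil contains a unique point of the $T$-plane. *)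

From HB Require Import structures.
From mathcomp Require Import all_boot all_order all_algebra all_field.
Set Implicit Arguments. Unset Strict Implicit. Unset Printing Implicit Defensive.
Import GRing.Theory.
Local Open Scope ring_scope.

Section PG.
Variables (F : finFieldType) (q : nat).

(* Homogeneous coordinates (x,y,z) of PG(2, q^3) as triples over F = F_{q^3}. *)
Definition vec3 := (F * F * F)%type.
Definition mk3 (x y z : F) : vec3 := (x, y, z).
Definition scale3 (c : F) (u : vec3) : vec3 :=
  let: (x, y, z) := u in (c * x, c * y, c * z).
Definition add3 (u v : vec3) : vec3 :=
  let: (x1, y1, z1) := u in let: (x2, y2, z2) := v in (x1 + x2, y1 + y2, z1 + z2).

Definition proj_eq (u v : vec3) : Prop := exists c : F, c != 0 /\ u = scale3 c v.

Definition on_line (P A B : vec3) : Prop :=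
  exists a b : F, P = add3 (scale3 a A) (scale3 b B).

Definition Nrm (x : F) : F := x ^+ (q ^ 2 + q + 1).

Definition Tpt : vec3 := mk3 0 0 1.

Definition Spt (theta x : F) : vec3 := mk3 (x * theta) (x ^+ q) 0.

Definition inS (theta : F) (P : vec3) : Prop :=
  exists x : F, x != 0 /\ proj_eq P (Spt theta x).

Definition Ppt (th r : F) : vec3 := mk3 (r * th ^+ q.+1) (r ^+ q) (r ^+ (q ^ 2) * th).

Definition inPlane (th : F) (P : vec3) : Prop :=
  exists r : F, r != 0 /\ proj_eq P (Ppt th r).

Definition same_plane (k1 k2 : F) : Prop := forall P, inPlane k1 P <-> inPlane k2 P.

(* equality of T-sls-pencils T S_theta (determined by the point sets S_theta) *)
Definition same_pencil (t1 t2 : F) : Prop := forall P, inS t1 P <-> inS t2 P.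

(* The pencil T S_theta arches over Pi_kappa: every line T X, X in S_theta,
   contains exactly one point (projective point) of Pi_kappa. *)
Definition arches (theta kappa : F) : Prop :=
  forall x : F, x != 0 ->
    (exists r : F, r != 0 /\ on_line (Ppt kappa r) Tpt (Spt theta x)) /\
    (forall r r' : F, r != 0 -> r' != 0 ->
       on_line (Ppt kappa r) Tpt (Spt theta x) ->
       on_line (Ppt kappa r') Tpt (Spt theta x) ->
       proj_eq (Ppt kappa r) (Ppt kappa r')).

(* nonzero square in the subfield F_q = {y | y^q = y} *)
Definition sq_Fq (a : F) : Prop := exists y : F, y ^+ q = y /\ y != 0 /\ a = y ^+ 2.

End PG.

From mathcomp Require Import all_boot all_order all_algebra all_field zify ring.
From mathcomp Require Import cyclic.
Set Implicit Arguments. Unset Strict Implicit. Unset Printing Implicit Defensive.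
Import GRing.Theory.
Local Open Scope ring_scope.

(* Everything is governed by the norm N : F_(q^3)^* -> F_q^*, which is onto and whose
   kernel consists of the s^(q-1) (Hilbert 90); both facts follow from the cyclicity
   of F^*.  The point (r k^(q+1), r^q, r^(q^2) k) of Pi_k lies on the line
   T (x th, x^q, 0) iff r^(q-1) = k^(q+1) x^(q-1) / th, whose right-hand side has
   norm N(k)^2 / N(th).  Hence T S_th arches over Pi_k iff N(th) = N(k)^2, the point
   then being unique up to an F_q-scalar; and Pi_k, S_th only depend on N(k), N(th).
   The count is that of square roots in F_q^*: squaring is bijective in
   characteristic 2 and two-to-one onto the squares otherwise. *)

Section FinFieldPowers.
Variable F : finFieldType.
Local Notation n := #|F|.-1.

Lemma card_pred_gt0 : (0 < n)%N.
Proof. by rewrite -ltnS (ltn_predK (finNzRing_gt1 F)) finNzRing_gt1. Qed.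

Lemma expf_card_pred (x : F) : x != 0 -> x ^+ n = 1.
Proof.
move=> x0; apply: (mulIf x0); rewrite mul1r -exprSr.
by rewrite (ltn_predK (finNzRing_gt1 F)) expf_card.
Qed.

Lemma finField_prim_root : exists g : F, n.-primitive_root g.
Proof.
have : has n.-primitive_root (enum (predC1 (0 : F))).
  apply: has_prim_root card_pred_gt0 _ (enum_uniq _) _.
    by apply/allP => x; rewrite mem_enum unity_rootE => /expf_card_pred ->.
  by rewrite -cardE cardC1.
by case/hasP => g _; exists g.
Qed.

Lemma expf_onto (d e : nat) (y : F) : (d * e)%N = n -> y != 0 -> y ^+ e = 1 ->
  exists2 x : F, x != 0 & x ^+ d = y.
Proof.
move=> de y0 ye; have [g g_prim] := finField_prim_root.
have [i yE] := prim_rootP g_prim (expf_card_pred y0).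
have e_gt0 : (0 < e)%N by move: card_pred_gt0; rewrite -de muln_gt0 => /andP[].
have /dvdnP[j ij] : (d %| i)%N.
  by rewrite -(dvdn_pmul2r e_gt0) de (prim_order_dvd g_prim) exprM -yE ye.
exists (g ^+ j); last by rewrite yE ij exprM.
by rewrite expf_neq0 // (prim_root_eq0 g_prim) -lt0n card_pred_gt0.
Qed.

End FinFieldPowers.

Lemma expf_ratio_fixed (R : fieldType) (e : nat) (a b r r' : R) : a != 0 -> r' != 0 ->
  r ^+ e * a = r * b -> r' ^+ e * a = r' * b -> (r / r') ^+ e = r / r'.
Proof.
move=> a0 r'0 er er'.
have b0 : b != 0.
  apply/eqP=> b0; move/eqP: er'; rewrite b0 mulr0 mulf_eq0 expf_eq0.
  by rewrite (negPf a0) (negPf r'0) andbF.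
rewrite exprMn exprVn -[r ^+ e](mulfK a0) -[r' ^+ e](mulfK a0) er er'.
by field; rewrite r'0 a0 b0.
Qed.

Section TPlanes.
Variables (F : finFieldType) (q : nat).
Hypotheses (q_gt1 : (1 < q)%N) (cardF : #|F| = (q ^ 3)%N).
Local Notation N := (Nrm q).
Implicit Types a b c x y w k t th r s : F.

Lemma card_pred_factor : (#|F|.-1 = (q - 1) * (q ^ 2 + q + 1))%N.
Proof. rewrite cardF; case: q q_gt1 => // m _; rewrite !expnS expn0; nia. Qed.

Lemma expf_cube x : x ^+ (q ^ 3) = x.
Proof. by rewrite -cardF expf_card. Qed.

Lemma Nrm_in_Fq x : N x ^+ q = N x.
Proof.
rewrite /Nrm -exprM.
have -> : ((q ^ 2 + q + 1) * q = q ^ 3 + (q ^ 2 + q))%N by rewrite !expnS expn0; nia.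
by rewrite exprD expf_cube -exprS addn1.
Qed.

Lemma Nrm1 : N (1 : F) = 1.
Proof. exact: expr1n. Qed.

Lemma NrmM x y : N (x * y) = N x * N y.
Proof. exact: exprMn. Qed.

Lemma NrmX x i : N (x ^+ i) = N x ^+ i.
Proof. exact: exprAC. Qed.

Lemma NrmV x : N x^-1 = (N x)^-1.
Proof. exact: exprVn. Qed.

Lemma Nrm_eq0 x : (N x == 0) = (x == 0).
Proof. by rewrite /Nrm expf_eq0 addn1. Qed.

Lemma Nrm_expSq x : N (x ^+ q.+1) = N x ^+ 2.
Proof. by rewrite NrmX exprS Nrm_in_Fq. Qed.

Lemma hilbert90 w : N w = 1 -> exists2 s, s != 0 & s ^+ q = s * w.
Proof.
move=> Nw; have w0 : w != 0 by rewrite -Nrm_eq0 Nw oner_neq0.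
have [s s0 sw] := expf_onto (esym card_pred_factor) w0 Nw.
by exists s; rewrite // -sw -exprS subn1 prednK // ltnW.
Qed.

Lemma Nrm_onto y : y != 0 -> y ^+ q = y -> exists2 k, k != 0 & N k = y.
Proof.
move=> y0 yq; apply: expf_onto => //; first by rewrite mulnC card_pred_factor.
by apply: (mulIf y0); rewrite mul1r -exprSr subn1 prednK // ltnW.
Qed.

Lemma on_line_TS k th r x : x != 0 ->
  on_line (Ppt q k r) (Tpt F) (Spt q th x) <-> r ^+ q * (th * x) = r * (k ^+ q.+1 * x ^+ q).
Proof.
move=> x0; rewrite /on_line /Ppt /Tpt /Spt /add3 /scale3 /mk3; split.
  case=> a [b [+ + _]]; rewrite !mulr0 !add0r => e1 e2.
  by rewrite e2 [RHS]mulrA e1; ring.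
move=> e; exists (r ^+ (q ^ 2) * k), (r ^+ q / x ^+ q).
have xq0 : x ^+ q != 0 by rewrite expf_neq0.
congr (_, _, _); rewrite ?mulr0 ?add0r ?mulr1 ?addr0 ?divfK //.
by apply: (mulIf xq0); rewrite -[LHS]mulrA -e; field.
Qed.

Lemma Ppt_scale k u r : u ^+ q = u -> Ppt q k (u * r) = scale3 u (Ppt q k r).
Proof.
move=> uq; have uq2 : u ^+ (q ^ 2) = u by rewrite expnS expn1 exprM uq uq.
by rewrite /Ppt /scale3 /mk3 !exprMn uq uq2; congr (_, _, _); ring.
Qed.

Lemma Ppt_transport w k s r : N w = 1 -> s ^+ q = s * w ^+ q.+1 ->
  Ppt q (w * k) (s * r) = scale3 (s * w ^+ q.+1) (Ppt q k r).
Proof.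
move=> Nw sq.
have sq2 : s ^+ (q ^ 2) = s * w ^+ q.
  rewrite expnS expn1 exprM sq exprMn sq -exprM -mulrA -exprD.
  have -> : (q.+1 + q.+1 * q = q + (q ^ 2 + q + 1))%N by rewrite expnS expn1; nia.
  by rewrite exprD -/(N w) Nw mulr1.
by rewrite /Ppt /scale3 /mk3 !exprMn sq sq2; congr (_, _, _); rewrite ?exprS; ring.
Qed.

Lemma Spt_transport w t s x : s ^+ q = s * w ->
  Spt q (w * t) (x * s) = scale3 (s * w) (Spt q t x).
Proof.
by move=> sq; rewrite /Spt /scale3 /mk3 exprMn sq; congr (_, _, _); ring.
Qed.

Lemma scale3M a b (v : vec3 F) : scale3 a (scale3 b v) = scale3 (a * b) v.
Proof. by case: v => [[x y] z]; rewrite /scale3 !mulrA. Qed.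

Lemma proj_eq_refl (v : vec3 F) : proj_eq v v.
Proof.
by exists 1; split; [exact: oner_neq0 | case: v => [[x y] z]; rewrite /scale3 !mul1r].
Qed.

Lemma proj_eq_scaler (P v : vec3 F) t : t != 0 -> proj_eq P v -> proj_eq P (scale3 t v).
Proof.
move=> t0 [c [c0 ->]]; exists (c / t); split; first by rewrite mulf_neq0 ?invr_eq0.
by rewrite scale3M mulfVK.
Qed.

Lemma inPlane_Nrm k1 k2 P : k1 != 0 -> N k1 = N k2 -> inPlane q k1 P -> inPlane q k2 P.
Proof.
move=> k10 Nk [r [r0 Pr]].
have Nw : N (k2 / k1) = 1 by rewrite NrmM NrmV Nk mulfV // -Nk Nrm_eq0.
have Nwq : N ((k2 / k1) ^+ q.+1) = 1 by rewrite NrmX Nw expr1n.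
have [s s0 sq] := hilbert90 Nwq.
exists (s * r); split; first by rewrite mulf_neq0.
rewrite -(divfK k10 k2) Ppt_transport //.
by apply: proj_eq_scaler Pr; rewrite mulf_neq0 // expf_neq0 // -Nrm_eq0 Nw oner_neq0.
Qed.

Lemma inS_Nrm t1 t2 P : t1 != 0 -> N t1 = N t2 -> inS q t1 P -> inS q t2 P.
Proof.
move=> t10 Nt [x [x0 Px]].
have Nw : N (t2 / t1) = 1 by rewrite NrmM NrmV Nt mulfV // -Nt Nrm_eq0.
have [s s0 sq] := hilbert90 Nw.
exists (x * s); split; first by rewrite mulf_neq0.
rewrite -(divfK t10 t2) Spt_transport //.
by apply: proj_eq_scaler Px; rewrite mulf_neq0 // -Nrm_eq0 Nw oner_neq0.
Qed.

Lemma Nrm_expq x : N (x ^+ q) = N x.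
Proof. by rewrite NrmX Nrm_in_Fq. Qed.

Lemma same_plane_Nrm k1 k2 : k1 != 0 -> k2 != 0 -> same_plane q k1 k2 <-> N k1 = N k2.
Proof.
move=> k10 k20; split=> [same | Nk P]; last by split; apply: inPlane_Nrm.
have /same[r [r0 [c [c0 []]]]] : inPlane q k1 (Ppt q k1 1).
  by exists 1; split; [exact: oner_neq0 | exact: proj_eq_refl].
rewrite !expr1n !mul1r => _ /(congr1 N) e2 /(congr1 N) e3.
rewrite NrmM Nrm_expq Nrm1 in e2.
rewrite e3 !NrmM expnS expn1 exprM !Nrm_expq -/(N c).
by rewrite mulrA -e2 mul1r.
Qed.

Lemma same_pencil_Nrm t1 t2 : t1 != 0 -> t2 != 0 -> N t1 = N t2 -> same_pencil q t1 t2.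
Proof. by move=> t10 t20 Nt P; split; apply: inS_Nrm. Qed.

Lemma arches_Nrm th k : th != 0 -> k != 0 -> arches q th k <-> N th = N k ^+ 2.
Proof.
move=> th0 k0; split=> [arch | Nth x x0].
  have [[r [r0 +]] _] := arch 1 (oner_neq0 F); rewrite on_line_TS ?oner_neq0 //.
  have Nr0 : N r != 0 by rewrite Nrm_eq0.
  rewrite !expr1n !mulr1 => /(congr1 N); rewrite !NrmM Nrm_expq Nrm_expSq.
  exact: (mulfI Nr0).
split=> [|r r' r0 r'0]; last first.
  rewrite !on_line_TS // => er er'; exists (r / r').
  split; first by rewrite mulf_neq0 ?invr_eq0.
  by rewrite -Ppt_scale ?divfK // (expf_ratio_fixed _ _ er er') // mulf_neq0.
have Nc : N (k ^+ q.+1 / th) = 1.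
  by rewrite NrmM NrmV Nrm_expSq Nth mulfV // expf_neq0 // Nrm_eq0.
have [s s0 sq] := hilbert90 Nc.
exists (x * s); split; first by rewrite mulf_neq0.
by rewrite on_line_TS // exprMn sq; field.
Qed.

Lemma arches_same_pencil th th' k : th != 0 -> th' != 0 -> k != 0 ->
  arches q th k -> arches q th' k -> same_pencil q th th'.
Proof.
move=> th0 th'0 k0; rewrite !arches_Nrm // => Nth Nth'.
by apply: same_pencil_Nrm; rewrite // Nth Nth'.
Qed.

Lemma arches_sq_Fq th k : th != 0 -> k != 0 -> arches q th k -> sq_Fq q (N th).
Proof.
move=> th0 k0; rewrite arches_Nrm // => Nth.
by exists (N k); rewrite Nrm_in_Fq Nrm_eq0.
Qed.

Section EvenCharacteristic.
Hypothesis pchar2 : 2 \in [pchar F].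

Lemma sqrf_inj_pchar2 : injective (fun x : F => x ^+ 2).
Proof. by move=> x y /eqP; rewrite eqf_sqr (oppr_pchar2 pchar2) orbb => /eqP. Qed.

Lemma arches_unique_pchar2 th : th != 0 ->
  exists k, k != 0 /\ arches q th k /\
    forall k', k' != 0 -> arches q th k' -> same_plane q k k'.
Proof.
move=> th0; have [sqrt _ sqrtE] := injF_bij sqrf_inj_pchar2.
set z := sqrt (N th); have z2 : z ^+ 2 = N th := sqrtE _.
have z0 : z != 0 by rewrite -sqrf_eq0 z2 Nrm_eq0.
have zq : z ^+ q = z by apply: sqrf_inj_pchar2; rewrite /= -exprM mulnC exprM z2 Nrm_in_Fq.
have [k k0 Nk] := Nrm_onto z0 zq.
exists k; split=> //; split=> [|k' k'0]; first by rewrite arches_Nrm // Nk.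
by rewrite arches_Nrm // same_plane_Nrm // Nk -z2 => /sqrf_inj_pchar2.
Qed.

End EvenCharacteristic.

Section OddCharacteristic.
Hypotheses (two_neq0 : 2%:R != 0 :> F) (q_odd : odd q).

Lemma arches_two_planes th : th != 0 -> sq_Fq q (N th) ->
  exists k1 k2, k1 != 0 /\ k2 != 0 /\ ~ same_plane q k1 k2 /\
    arches q th k1 /\ arches q th k2 /\
    forall k, k != 0 -> arches q th k -> same_plane q k k1 \/ same_plane q k k2.
Proof.
move=> th0 [y [yq [y0 Nth]]].
have [k1 k10 Nk1] := Nrm_onto y0 yq.
have [k2 k20 Nk2] : exists2 k2, k2 != 0 & N k2 = - y.
  by apply: Nrm_onto; rewrite ?oppr_eq0 // exprNn -signr_odd q_odd yq mulN1r.
exists k1, k2; do 2!split=> //; split.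
  rewrite same_plane_Nrm // Nk1 Nk2 => /eqP; rewrite -addr_eq0 -mulr2n -mulr_natr.
  by rewrite mulf_eq0 (negPf y0) (negPf two_neq0).
rewrite !arches_Nrm // Nk1 Nk2 sqrrN; do 2!split=> //.
move=> k k0; rewrite arches_Nrm // !same_plane_Nrm // Nk1 Nk2 Nth.
by move/eqP; rewrite eq_sym eqf_sqr => /orP[] /eqP; [left | right].
Qed.

End OddCharacteristic.

End TPlanes.

Theorem corollary6p2 (F : finFieldType) (q : nat)
  (hq : exists p k : nat, prime p /\ (0 < k)%N /\ q = (p ^ k)%N)
  (hF : #|F| = (q ^ 3)%N) :
  (~~ odd q ->
     (forall theta : F, theta != 0 ->
        exists kappa : F, kappa != 0 /\ arches q theta kappa /\
          (forall kappa' : F, kappa' != 0 -> arches q theta kappa' ->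
             same_plane q kappa kappa')) /\
     (forall theta theta' kappa : F, theta != 0 -> theta' != 0 -> kappa != 0 ->
        arches q theta kappa -> arches q theta' kappa ->
        same_pencil q theta theta'))
  /\
  (odd q ->
     (forall theta : F, theta != 0 -> sq_Fq q (Nrm q theta) ->
        exists kappa1 kappa2 : F, kappa1 != 0 /\ kappa2 != 0 /\
          ~ same_plane q kappa1 kappa2 /\
          arches q theta kappa1 /\ arches q theta kappa2 /\
          (forall kappa : F, kappa != 0 -> arches q theta kappa ->
             same_plane q kappa kappa1 \/ same_plane q kappa kappa2)) /\
     (forall theta : F, theta != 0 -> ~ sq_Fq q (Nrm q theta) ->
        forall kappa : F, kappa != 0 -> ~ arches q theta kappa)).
Proof.
have [p [e [p_pr [e_gt0 qE]]]] := hq.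
have q_gt1 : (1 < q)%N by rewrite qE -(expn0 p) ltn_exp2l // prime_gt1.
have pF : p \in [pchar F] by apply: card_finPcharP p_pr; rewrite hF qE -expnM.
have oddqE : odd q = odd p by rewrite qE oddX eqn0Ngt e_gt0.
split=> [q_even | q_odd]; split.
- have p2 : p = 2 by case: (even_prime p_pr) => // p_odd; rewrite oddqE p_odd in q_even.
  by apply: arches_unique_pchar2 => //; rewrite -p2.
- exact: arches_same_pencil.
- apply: arches_two_planes => //; rewrite -(dvdn_pcharf pF) dvdn_prime2 //.
  by apply: contraTneq q_odd => p2; rewrite oddqE p2.
- by move=> th th0 nsq k k0 /(arches_sq_Fq q_gt1 hF th0 k0).
Qed.
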